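(* Let $(C,f,P,Q)$ be a postcritically finite quadratic morphism over a field $K$ of characteristic $\ne2$. Then its postcritical orbit $\Gamma=\{f^n(P),f^n(Q)\mid n\ge1\}$, together with the map $\tau\colon\Gamma\to\Gamma$ induced by $f$ and the distinguished elements $i_1:=f(P)$ and $j_1:=f(Q)$, is a finite mapping scheme.
   Context: A quadratic morphism over a field $K$ (of characteristic $\ne2$) is a quadruple $(C,f,P,Q)$ with $C\cong\mathbb{P}^1_K$, $f\colon C\to C$ a morphism of degree $2$, and $P,Q\in C(K)$ the points whose images are precisely the critical points of $f$ (where $df=0$). The postcritical orbit is $\{f^n(P),f^n(Q)\mid n\ge1\}$, and $f$ is postcritically finite if this set is finite. A finite mapping scheme is a quadruple $(\Gamma,\tau,i_1,j_1)$ consisting of a finite set $\Gamma$, a map $\tau\colon\Gamma\to\Gamma$ and two distinct elements $i_1,j_1\in\Gamma$ such that, writing $i_n:=\tau^{n-1}(i_1)$, $j_n:=\tau^{n-1}(j_1)$ for $n\ge2$: (a) $\Gamma=\{i_n,j_n\mid n\ge1\}$; (b) $|\tau^{-1}(\gamma)|\le2$ for all $\gamma\in\Gamma$; (c) $|\tau^{-1}(i_1)|\le1$ and $|\tau^{-1}(j_1)|\le1$. *)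

From HB Require Import structures.
From mathcomp Require Import all_boot all_order all_algebra.
Set Implicit Arguments. Unset Strict Implicit. Unset Printing Implicit Defensive.
Import Order.TTheory GRing.Theory Num.Theory.
Local Open Scope ring_scope.

Record qform (K : fieldType) := QForm { qa : K; qb : K; qc : K }.

Definition qeval (K : fieldType) (F : qform K) (x y : K) : K :=
  qa F * x ^+ 2 + qb F * x * y + qc F * y ^+ 2.
Definition qdx (K : fieldType) (F : qform K) (x y : K) : K := 2%:R * qa F * x + qb F * y.
Definition qdy (K : fieldType) (F : qform K) (x y : K) : K := qb F * x + 2%:R * qc F * y.

Definition qres (K : fieldType) (F G : qform K) : K :=
  (qa F * qc G - qa G * qc F) ^+ 2
  - (qa F * qb G - qa G * qb F) * (qb F * qc G - qb G * qc F).

(* P^1(K): [Some x] is the point [x:1], [None] is the point [1:0] = infinity. *)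
Definition P1 (K : fieldType) := option K.

Definition rep (K : fieldType) (p : P1 K) : K * K :=
  match p with Some x => (x, 1) | None => (1, 0) end.

Definition normalize (K : fieldType) (u v : K) : P1 K :=
  if v == 0 then None else Some (u / v).

Definition fmap (K : fieldType) (F G : qform K) (p : P1 K) : P1 K :=
  let: (x, y) := rep p in normalize (qeval F x y) (qeval G x y).

(* Jacobian determinant of (F,G) at a homogeneous representative;
   in characteristic <> 2 its zeros are exactly the points where df = 0. *)
Definition jac (K : fieldType) (F G : qform K) (p : P1 K) : K :=
  let: (x, y) := rep p in qdx F x y * qdy G x y - qdy F x y * qdx G x y.

Definition critical (K : fieldType) (F G : qform K) (p : P1 K) : Prop :=
  jac F G p = 0.

(* (P^1, f = [F:G], P, Q) is a quadratic morphism: F, G coprime binary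
   quadratic forms (nonzero resultant, so f has degree 2) and P, Q are
   precisely the (distinct) critical points of f. *)
Definition quadratic_morphism (K : fieldType) (F G : qform K) (P Q : P1 K) : Prop :=
  qres F G != 0 /\ P != Q /\ (forall p : P1 K, critical F G p <-> (p = P \/ p = Q)).

Definition postcritically_finite (K : fieldType) (F G : qform K) (P Q : P1 K) : Prop :=
  exists s : seq (P1 K), forall n : nat,
    iter n.+1 (fmap F G) P \in s /\ iter n.+1 (fmap F G) Q \in s.

(* Finite mapping scheme (Gamma, tau, i1, j1); Gamma finite = finType.
   i_n = tau^(n-1) i1, j_n = tau^(n-1) j1. *)
Definition finite_mapping_scheme (Gamma : finType) (tau : Gamma -> Gamma)
    (i1 j1 : Gamma) : Prop :=
  [/\ i1 != j1,
      (forall g : Gamma, exists n : nat, g = iter n tau i1 \/ g = iter n tau j1),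
      (forall g : Gamma, #|[set x | tau x == g]| <= 2)%N,
      (#|[set x | tau x == i1]| <= 1)%N &
      (#|[set x | tau x == j1]| <= 1)%N].

(* A point q lies in the fibre of f = [F:G] through p iff it is a zero of the quadratic
   form G(p) F - F(p) G, which is nonzero since Res(F, G) <> 0; hence every fibre has at
   most two points.  At a critical point p this form has vanishing gradient (Euler's
   identity), so in characteristic <> 2 it is a nonzero multiple of the square of the
   linear form vanishing at p, and the fibre through p is {p}.  A forward orbit contained
   in a list s loops within size s steps, so the postcritical orbit is the finite list of
   the first size s iterates of f(P) and f(Q), and f acts on it with these fibre bounds. *)

From mathcomp Require Import all_boot all_order all_algebra.
From mathcomp Require Import ring.
Set Implicit Arguments. Unset Strict Implicit. Unset Printing Implicit Defensive.
Import GRing.Theory.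
Local Open Scope ring_scope.

Definition fibre_card_le (T : eqType) (f : T -> T) (y : T) (k : nat) : Prop :=
  forall l : seq T, uniq l -> {in l, forall x, f x = y} -> (size l <= k)%N.

Lemma fibre_card_le1 (T : eqType) (f : T -> T) (y x0 : T) :
  (forall x, f x = y -> x = x0) -> fibre_card_le f y 1.
Proof.
move=> fx0 l l_uniq fl; apply: (uniq_leq_size (s2 := [:: x0])) => // x /fl /fx0 ->.
exact: mem_head.
Qed.

Lemma card_tau_preim_le (Gamma : finType) (T : eqType) (emb : Gamma -> T)
    (tau : Gamma -> Gamma) (f : T -> T) (g : Gamma) (k : nat) :
  injective emb -> (forall x, emb (tau x) = f (emb x)) ->
  fibre_card_le f (emb g) k -> (#|[set x | tau x == g]| <= k)%N.
Proof.
move=> emb_inj emb_tau fk; rewrite cardE -(size_map emb); apply: fk.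
  by rewrite (map_inj_uniq emb_inj) enum_uniq.
by move=> y /mapP[x]; rewrite mem_enum inE => /eqP tau_x ->; rewrite -tau_x emb_tau.
Qed.

Lemma looping_of_orbit_sub (T : eqType) (f : T -> T) (x : T) (s : seq T) :
  (forall n, iter n f x \in s) -> looping f x (size s).
Proof.
move=> orbit_s; apply/negbNE; rewrite -looping_uniq; apply/negP => t_uniq.
have t_sub : {subset traject f x (size s).+1 <= s} by move=> y /trajectP[i _ ->].
by have := uniq_leq_size t_uniq t_sub; rewrite size_traject ltnn.
Qed.

Section PostcriticalScheme.

Variables (T : choiceType) (f : T -> T) (P Q : T).
Hypothesis fPQ : f P != f Q.
Hypothesis orbit_fin :
  exists s : seq T, forall n, iter n.+1 f P \in s /\ iter n.+1 f Q \in s.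
Hypothesis fibre_le2 : forall y, fibre_card_le f y 2.
Hypothesis fibreP_le1 : fibre_card_le f (f P) 1.
Hypothesis fibreQ_le1 : fibre_card_le f (f Q) 1.

Lemma postcritical_mapping_scheme :
  exists (Gamma : finType) (emb : Gamma -> T) (tau : Gamma -> Gamma)
         (i1 j1 : Gamma),
    [/\ injective emb,
        (forall x : T, (exists g : Gamma, emb g = x) <->
           (exists n : nat, x = iter n.+1 f P \/ x = iter n.+1 f Q)),
        (forall g : Gamma, emb (tau g) = f (emb g)),
        emb i1 = f P /\ emb j1 = f Q &
        finite_mapping_scheme tau i1 j1].
Proof.
have [s orbit_s] := orbit_fin.
pose N := size s.
have /loopingP trajP : looping f (f P) N.
  by apply: looping_of_orbit_sub => n; rewrite -iterSr; case: (orbit_s n).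
have /loopingP trajQ : looping f (f Q) N.
  by apply: looping_of_orbit_sub => n; rewrite -iterSr; case: (orbit_s n).
pose t := traject f (f P) N ++ traject f (f Q) N.
have mem_t x : x \in t <-> exists n, x = iter n.+1 f P \/ x = iter n.+1 f Q.
  rewrite mem_cat; split.
    by case/orP => /trajectP[n _ ->]; exists n; rewrite !iterSr; [left|right].
  by case=> n [->|->]; rewrite iterSr (trajP, trajQ) ?orbT.
have t_stable (g : seq_sub t) : f (ssval g) \in t.
  by have /mem_t[n [->|->]] := ssvalP g; apply/mem_t; exists n.+1; [left|right].
have fP_t : f P \in t by apply/mem_t; exists 0%N; left.
have fQ_t : f Q \in t by apply/mem_t; exists 0%N; right.
pose tau (g : seq_sub t) : seq_sub t := SeqSub (t_stable g).
pose i1 : seq_sub t := SeqSub fP_t.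
pose j1 : seq_sub t := SeqSub fQ_t.
have emb_inj : injective (@ssval _ t) by exact: val_inj.
have iter_i1 n : ssval (iter n tau i1) = iter n.+1 f P.
  by elim: n => // n IHn; rewrite iterS /= IHn.
have iter_j1 n : ssval (iter n tau j1) = iter n.+1 f Q.
  by elim: n => // n IHn; rewrite iterS /= IHn.
have card_preim g k :
    fibre_card_le f (ssval g) k -> (#|[set x | tau x == g]| <= k)%N.
  exact: card_tau_preim_le.
exists (seq_sub t), (@ssval _ t), tau, i1, j1; split => //.
- move=> x; split => [[g <-]|/mem_t x_t]; last by exists (SeqSub x_t).
  exact/mem_t/ssvalP.
- split.
  + by apply: contra_neq fPQ => /(congr1 (@ssval _ t)).
  + move=> g; have /mem_t[n [g_n|g_n]] := ssvalP g; exists n;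
      [left|right]; apply: emb_inj; by rewrite ?iter_i1 ?iter_j1.
  + by move=> g; apply: card_preim.
  + by apply: card_preim.
  + by apply: card_preim.
Qed.

End PostcriticalScheme.

Section BinaryQuadraticForms.

Variable K : fieldType.
Implicit Types (F G H : qform K) (p q : P1 K).

Definition qeval_at H p : K := qeval H (rep p).1 (rep p).2.

Definition qform_nonzero H : Prop := ~ [/\ qa H = 0, qb H = 0 & qc H = 0].

Lemma qeval_at_Some H x : qeval_at H (Some x) = qa H * x ^+ 2 + qb H * x + qc H.
Proof. by rewrite /qeval_at /qeval /=; ring. Qed.

Lemma qeval_at_None H : qeval_at H None = qa H.
Proof. by rewrite /qeval_at /qeval /=; ring. Qed.

Lemma fmapE F G p : fmap F G p = normalize (qeval_at F p) (qeval_at G p).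
Proof. by case: p. Qed.

Lemma qres_neq0_no_common_zero F G p :
  qres F G != 0 -> qeval_at F p != 0 \/ qeval_at G p != 0.
Proof.
move=> res_nz; case: (eqVneq (qeval_at F p) 0) => [Fp|]; last by left.
right; apply: contra_neq res_nz => Gp; move: Fp Gp; rewrite /qres.
case: p => [x|]; rewrite ?qeval_at_Some ?qeval_at_None => Fx Gx.
- have -> : qc F = - (qa F * x ^+ 2 + qb F * x) by rewrite -[RHS]addr0 -Fx; ring.
  have -> : qc G = - (qa G * x ^+ 2 + qb G * x) by rewrite -[RHS]addr0 -Gx; ring.
  by ring.
- by rewrite Fx Gx; ring.
Qed.

Lemma normalize_eq (a b c d : K) : (a != 0 \/ b != 0) -> (c != 0 \/ d != 0) ->
  normalize a b = normalize c d <-> a * d - b * c = 0.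
Proof.
rewrite /normalize.
case: (eqVneq b 0) => [->|b_nz]; case: (eqVneq d 0) => [->|d_nz] ab_nz cd_nz.
- by split=> // _; rewrite mulr0 mul0r subr0.
- split=> [//|]; rewrite mul0r subr0 => /eqP; rewrite mulf_eq0 (negbTE d_nz) orbF.
  by case: ab_nz; rewrite ?eqxx // => /negbTE ->.
- split=> [//|]; rewrite mulr0 sub0r => /eqP; rewrite oppr_eq0 mulf_eq0 (negbTE b_nz).
  by case: cd_nz; rewrite ?eqxx // => /negbTE ->.
- have -> : a * d - b * c = (a / b - c / d) * (b * d) by field; rewrite b_nz d_nz.
  split=> [[->]|/eqP]; first by rewrite subrr mul0r.
  by rewrite !mulf_eq0 (negbTE b_nz) (negbTE d_nz) !orbF subr_eq0 => /eqP ->.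
Qed.

Definition fibre_form F G p : qform K :=
  QForm (qeval_at G p * qa F - qeval_at F p * qa G)
        (qeval_at G p * qb F - qeval_at F p * qb G)
        (qeval_at G p * qc F - qeval_at F p * qc G).

Lemma qeval_fibre_form F G p q : qeval_at (fibre_form F G p) q =
  qeval_at G p * qeval_at F q - qeval_at F p * qeval_at G q.
Proof. by rewrite /fibre_form /qeval_at /qeval /=; ring. Qed.

Lemma fmap_eq_fibre_form F G p q : qres F G != 0 ->
  fmap F G q = fmap F G p <-> qeval_at (fibre_form F G p) q = 0.
Proof.
move=> res_nz; rewrite !fmapE qeval_fibre_form.
rewrite normalize_eq; try exact: qres_neq0_no_common_zero.
by rewrite [LHS](_ : _ = qeval_at G p * qeval_at F q - qeval_at F p * qeval_at G q) //;
  ring.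
Qed.

(* The 2x2 minors of (F, fibre_form F G p) and (fibre_form F G p, G) are those of
   (F, G) scaled by -F(p) resp. G(p), and qres is quadratic in the minors. *)
Lemma fibre_form_nonzero F G p : qres F G != 0 -> qform_nonzero (fibre_form F G p).
Proof.
move=> res_nz [a0 b0 c0].
have resF : qeval_at F p ^+ 2 * qres F G = 0.
  transitivity (qres F (fibre_form F G p)); first by rewrite /qres /fibre_form /=; ring.
  by rewrite /qres a0 b0 c0; ring.
have resG : qeval_at G p ^+ 2 * qres F G = 0.
  transitivity (qres (fibre_form F G p) G); first by rewrite /qres /fibre_form /=; ring.
  by rewrite /qres a0 b0 c0; ring.
have [Fp_nz|Gp_nz] := qres_neq0_no_common_zero p res_nz.
- by move/eqP: resF; rewrite mulf_eq0 sqrf_eq0 (negbTE Fp_nz) (negbTE res_nz).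
- by move/eqP: resG; rewrite mulf_eq0 sqrf_eq0 (negbTE Gp_nz) (negbTE res_nz).
Qed.

Lemma qform_root_pair H x y : x != y ->
  qeval_at H (Some x) = 0 -> qeval_at H (Some y) = 0 -> qa H * (x + y) + qb H = 0.
Proof.
rewrite !qeval_at_Some => xy Hx Hy.
have : (x - y) * (qa H * (x + y) + qb H) = 0.
  by rewrite -[RHS](subrr 0) -{1}Hx -Hy; ring.
by move/eqP; rewrite mulf_eq0 subr_eq0 (negbTE xy) => /eqP.
Qed.

Lemma qform_linear_two_roots H x y : qform_nonzero H -> qa H = 0 -> x != y ->
  qeval_at H (Some x) = 0 -> qeval_at H (Some y) = 0 -> False.
Proof.
move=> H_nz a0 xy Hx Hy; have := qform_root_pair xy Hx Hy.
rewrite a0 mul0r add0r => b0; apply: H_nz; split=> //.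
by move: Hx; rewrite qeval_at_Some a0 b0 => <-; ring.
Qed.

Lemma qform_no_three_roots H p1 p2 p3 : qform_nonzero H ->
  p1 != p2 -> p1 != p3 -> p2 != p3 ->
  qeval_at H p1 = 0 -> qeval_at H p2 = 0 -> qeval_at H p3 = 0 -> False.
Proof.
move=> H_nz; case: p1 => [x|]; case: p2 => [y|]; case: p3 => [z|] //=;
  rewrite ?(inj_eq Some_inj) ?qeval_at_None => xy xz yz Hx Hy Hz.
- apply: (qform_linear_two_roots H_nz _ xy Hx Hy).
  have : qa H * (y - z) = 0.
    rewrite -[RHS](subrr 0) -{1}(qform_root_pair xy Hx Hy).
    by rewrite -(qform_root_pair xz Hx Hz); ring.
  by move/eqP; rewrite mulf_eq0 subr_eq0 (negbTE yz) orbF => /eqP.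
- exact: (qform_linear_two_roots H_nz Hz xy Hx Hy).
- exact: (qform_linear_two_roots H_nz Hy xz Hx Hz).
- exact: (qform_linear_two_roots H_nz Hx yz Hy Hz).
Qed.

Lemma qform_roots_size H (l : seq (P1 K)) : qform_nonzero H ->
  uniq l -> {in l, forall p, qeval_at H p = 0} -> (size l <= 2)%N.
Proof.
case: l => [|p1 [|p2 [|p3 l]]] //= H_nz /and4P[p1_l p2_l _ _] Hl; exfalso.
rewrite !inE !negb_or in p1_l p2_l.
case/and3P: p1_l => p12 p13 _; case/andP: p2_l => p23 _.
by apply: (qform_no_three_roots H_nz p12 p13 p23); apply: Hl; rewrite !inE eqxx ?orbT.
Qed.

Lemma qform_singular_root_unique H p q : (2%:R : K) != 0 -> qform_nonzero H ->
  qdx H (rep p).1 (rep p).2 = 0 -> qdy H (rep p).1 (rep p).2 = 0 ->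
  qeval_at H q = 0 -> q = p.
Proof.
move=> two_nz H_nz.
have half (z : K) : 2%:R * z = 0 -> z = 0.
  by move/eqP; rewrite mulf_eq0 (negbTE two_nz) => /eqP.
case: p => [x|]; rewrite /qdx /qdy /= => dx dy Hq.
- have a_nz : qa H <> 0.
    move=> a0; apply: H_nz; have b0 : qb H = 0 by rewrite -dx a0; ring.
    by split=> //; apply: half; rewrite -dy b0; ring.
  case: q Hq => [y|] Hq; last by rewrite qeval_at_None in Hq.
  case: (eqVneq y x) => [->//|yx]; exfalso; apply: a_nz.
  (* Taylor expansion of H at its singular point x *)
  have : 2%:R * qa H * (y - x) ^+ 2 = 0.
    transitivity (2%:R * qeval_at H (Some y)
                  - (2%:R * qa H * x + qb H * 1) * (2%:R * y - x)
                  - (qb H * x + 2%:R * qc H * 1)); first by rewrite qeval_at_Some; ring.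
    by rewrite Hq dx dy; ring.
  move/eqP; rewrite -mulrA mulf_eq0 (negbTE two_nz) mulf_eq0 sqrf_eq0.
  by rewrite subr_eq0 (negbTE yx) orbF => /eqP.
- have a0 : qa H = 0 by apply: half; rewrite -dx; ring.
  have b0 : qb H = 0 by rewrite -dy; ring.
  case: q Hq => [y|] // Hq; exfalso; apply: H_nz; split=> //.
  by rewrite -Hq qeval_at_Some a0 b0; ring.
Qed.

(* By Euler's identity 2 F = x F_x + y F_y, the gradient of the fibre form at p
   is a multiple of the Jacobian. *)
Lemma fibre_form_grad F G p :
  2%:R * qdx (fibre_form F G p) (rep p).1 (rep p).2 = (rep p).2 * jac F G p /\
  2%:R * qdy (fibre_form F G p) (rep p).1 (rep p).2 = - (rep p).1 * jac F G p.
Proof.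
by case: p => [x|]; rewrite /fibre_form /jac /qdx /qdy /qeval_at /qeval /=; split; ring.
Qed.

Lemma fmap_fibre_critical F G p q : (2%:R : K) != 0 -> qres F G != 0 ->
  critical F G p -> fmap F G q = fmap F G p -> q = p.
Proof.
move=> two_nz res_nz crit /(fmap_eq_fibre_form _ _ res_nz) Hq.
have [dx dy] := fibre_form_grad F G p; rewrite crit !mulr0 in dx dy.
apply: (qform_singular_root_unique two_nz (fibre_form_nonzero (p := p) res_nz) _ _ Hq).
- by move/eqP: dx; rewrite mulf_eq0 (negbTE two_nz) => /eqP.
- by move/eqP: dy; rewrite mulf_eq0 (negbTE two_nz) => /eqP.
Qed.

Lemma fmap_fibre_card_le2 F G y : qres F G != 0 -> fibre_card_le (fmap F G) y 2.
Proof.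
move=> res_nz [|p l] // pl_uniq fibre_pl.
apply: (qform_roots_size (fibre_form_nonzero (p := p) res_nz) pl_uniq) => q ql.
apply/(fmap_eq_fibre_form _ _ res_nz).
by rewrite (fibre_pl q ql) (fibre_pl p) ?mem_head.
Qed.

End BinaryQuadraticForms.

Theorem proposition2p2 (K : fieldType) (F G : qform K) (P Q : P1 K) :
  (2%:R : K) != 0 ->
  quadratic_morphism F G P Q ->
  postcritically_finite F G P Q ->
  exists (Gamma : finType) (emb : Gamma -> P1 K) (tau : Gamma -> Gamma)
         (i1 j1 : Gamma),
    [/\ injective emb,
        (forall x : P1 K, (exists g : Gamma, emb g = x) <->
           (exists n : nat, x = iter n.+1 (fmap F G) P \/ x = iter n.+1 (fmap F G) Q)),
        (forall g : Gamma, emb (tau g) = fmap F G (emb g)),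
        emb i1 = fmap F G P /\ emb j1 = fmap F G Q &
        finite_mapping_scheme tau i1 j1].
Proof.
move=> two_nz [res_nz [PQ critPQ]] pcf.
have fibre_crit p : p = P \/ p = Q -> forall x, fmap F G x = fmap F G p -> x = p.
  by move=> /critPQ p_crit x; apply: fmap_fibre_critical.
apply: (postcritical_mapping_scheme _ pcf).
- by apply: contra_neq PQ; apply: fibre_crit; right.
- by move=> y; apply: fmap_fibre_card_le2.
- by apply: fibre_card_le1; apply: fibre_crit; left.
- by apply: fibre_card_le1; apply: fibre_crit; right.
Qed.
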